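(* There is no uncountable set $\mathcal{S}$ of Turing degrees such that $\mathbb{R}_{\mathcal{S}}$ is $|\mathcal{S}|$-$2$-entangled.
   Context: $\mathbb{R}_{\mathcal{S}}$ is the set of reals whose Turing degree lies in $\mathcal{S}$. For $\aleph_0<\kappa\le 2^{\aleph_0}$, a set $A\subseteq\mathbb{R}$ is $\kappa$-$2$-entangled if $|A|\ge\kappa$ and for every collection of $\kappa$ many pairwise disjoint pairs of elements of $A$ (pairs $(x_\alpha,y_\alpha)$ with $x_\alpha\ne y_\alpha$ and $\{x_\alpha,y_\alpha\}\cap\{x_\beta,y_\beta\}=\emptyset$ for $\alpha\ne\beta$) there are pairs $(x_1,y_1),(x_2,y_2)$ in the collection with $x_1<x_2,y_1<y_2$ and pairs $(w_1,z_1),(w_2,z_2)$ in the collection with $w_1<w_2$, $z_1>z_2$. *)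

(* reals are an abstract realType (every realType is
   isomorphic to the usual reals). *)
From HB Require Import structures.
From mathcomp Require Import all_boot all_order all_algebra.
From mathcomp Require Import reals.
Set Implicit Arguments. Unset Strict Implicit. Unset Printing Implicit Defensive.
Import Order.TTheory GRing.Theory Num.Theory.

(* Oracle partial recursive functions (Kleene), with oracle O : nat -> bool.
   Arguments are passed as a list; missing arguments default to 0.       *)
Inductive prog : Type :=
| PZero : prog
| PSucc : prog
| PProj : nat -> prog
| POracle : prog
| PComp : prog -> list prog -> prog
| PPrim : prog -> prog -> prog
| PMu : prog -> prog.

Inductive eval (O : nat -> bool) : prog -> seq nat -> nat -> Prop :=
| eZero v : eval O PZero v 0
| eSucc v : eval O PSucc v (head 0 v).+1
| eProj i v : eval O (PProj i) v (nth 0 v i)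
| eOracle v : eval O POracle v (if O (head 0 v) then 1 else 0)
| eComp f gs v ws r :
    evals O gs v ws -> eval O f ws r -> eval O (PComp f gs) v r
| ePrim0 f g v r : eval O f v r -> eval O (PPrim f g) (0 :: v) r
| ePrimS f g n v r r' :
    eval O (PPrim f g) (n :: v) r -> eval O g (n :: r :: v) r' ->
    eval O (PPrim f g) (n.+1 :: v) r'
| eMu f v n :
    eval O f (n :: v) 0 ->
    (forall m, m < n -> exists k, eval O f (m :: v) k.+1) ->
    eval O (PMu f) v n
with evals (O : nat -> bool) : list prog -> seq nat -> seq nat -> Prop :=
| esNil v : evals O [::] v [::]
| esCons g gs v w ws : eval O g v w -> evals O gs v ws -> evals O (g :: gs) v (w :: ws).

Definition turing_le (A B : nat -> bool) : Prop :=
  exists p : prog, forall n, eval B p [:: n] (if A n then 1 else 0).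

Definition turing_eq (A B : nat -> bool) : Prop := turing_le A B /\ turing_le B A.

(* A set of Turing degrees is represented by the (degree-invariant) union of
   the degrees it contains, i.e. a predicate on sets of naturals closed
   under Turing equivalence. *)
Definition degree_invariant (S : (nat -> bool) -> Prop) : Prop :=
  forall A B, turing_eq A B -> S A -> S B.

(* J has the same cardinality as the set of degrees in S:
   a bijection between J and the degrees of S, given by representatives. *)
Definition equipotent_degrees (J : Type) (S : (nat -> bool) -> Prop) : Prop :=
  exists f : J -> (nat -> bool),
    [/\ forall j, S (f j),
        forall j k, turing_eq (f j) (f k) -> j = k
      & forall A, S A -> exists j, turing_eq (f j) A].

Definition countable_degrees (S : (nat -> bool) -> Prop) : Prop :=
  exists g : (nat -> bool) -> nat,
    forall A B, S A -> S B -> g A = g B -> turing_eq A B.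

(* The Turing degree of a real x is the degree of its left Dedekind cut
   {q in Q | q < x}, coded as a set of naturals via the canonical
   enumeration of rat. *)
Definition real_code (R : realType) (x : R) : nat -> bool :=
  fun n => match (unpickle n : option rat) with
           | Some q => (ratr q < x)%R
           | None => false
           end.

Definition reals_in_degrees (R : realType) (S : (nat -> bool) -> Prop) (x : R) : Prop :=
  S (real_code x).

(* A is kappa-2-entangled, with kappa = |S| given as "equipotent to the
   degrees of S":  |A| >= kappa, and every collection of kappa many
   pairwise disjoint pairs of distinct elements of A contains an
   increasing and a decreasing couple of pairs. *)
Definition entangled2 (R : realType) (S : (nat -> bool) -> Prop) (A : R -> Prop) : Prop :=
  (exists (I : Type) (e : I -> R),
      equipotent_degrees I S /\ (forall i, A (e i)) /\ injective e) /\
  (forall (J : Type) (x y : J -> R),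
      equipotent_degrees J S ->
      (forall a, A (x a) /\ A (y a) /\ x a <> y a) ->
      (forall a b, a <> b ->
         [/\ x a <> x b, x a <> y b, y a <> x b & y a <> y b]) ->
      (exists a b, (x a < x b)%R /\ (y a < y b)%R) /\
      (exists a b, (x a < x b)%R /\ (y b < y a)%R)).

From mathcomp Require Import all_boot all_order all_algebra.
From mathcomp Require Import reals.
From mathcomp Require Import zify ring lra.
Set Implicit Arguments. Unset Strict Implicit. Unset Printing Implicit Defensive.
Import Order.TTheory GRing.Theory Num.Theory.

(* Let [to_pos x] be [x + 1] for [x >= 0] and [1 / (1 - x)] for [x < 0], an
   increasing bijection of the reals onto the positive reals, and let
   [to_neg x := - 1 / to_pos x], an increasing bijection onto the negative
   reals.  Both maps and their inverses send rationals to rationals by explicit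
   formulas, so whether [q < to_pos x] is decided either outright (when
   [q <= 0]) or by asking whether [to_pos^-1 q < x]; hence the left cuts of
   [x], [to_pos x] and [to_neg x] are Turing equivalent, and [R_S] is closed
   under both maps.  If [e] lists [|S|] many distinct reals of [R_S], the pairs
   [(to_neg (e i), to_pos (e i))] are pairwise disjoint, and since both maps are
   increasing no two of them form a decreasing couple. *)

(** * Two increasing maps onto the half-lines *)

Section IncreasingMaps.
Variable R : realType.
Local Open Scope ring_scope.
Implicit Types x y p : R.

Definition to_pos x : R := if 0 <= x then x + 1 else (1 - x)^-1.
Definition to_neg x : R := - (to_pos x)^-1.

Lemma to_pos_ge0 x : 0 <= x -> to_pos x = x + 1.
Proof. by rewrite /to_pos => ->. Qed.

Lemma to_pos_lt0 x : x < 0 -> to_pos x = (1 - x)^-1.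
Proof. by rewrite /to_pos => /lt_geF ->. Qed.

Lemma to_pos_gt0 x : 0 < to_pos x.
Proof.
case: (lerP 0 x) => Hx; first by rewrite to_pos_ge0 //; lra.
by rewrite to_pos_lt0 // invr_gt0; lra.
Qed.

Lemma to_neg_lt0 x : to_neg x < 0.
Proof. by rewrite /to_neg oppr_lt0 invr_gt0 to_pos_gt0. Qed.

Lemma to_pos_homo : {homo to_pos : x y / x < y}.
Proof.
move=> x y Hxy; case: (lerP 0 x) => Hx; case: (lerP 0 y) => Hy; try lra.
- by rewrite !to_pos_ge0 //; lra.
- rewrite to_pos_lt0 // to_pos_ge0 //; have : (1 - x)^-1 < 1 by rewrite invf_lt1; lra.
  lra.
- by rewrite !to_pos_lt0 // ltf_pV2 ?posrE; lra.
Qed.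

Lemma ltr_to_pos : {mono to_pos : x y / x < y}.
Proof. exact/leW_mono/le_mono/to_pos_homo. Qed.

Lemma ltr_to_neg : {mono to_neg : x y / x < y}.
Proof. by move=> x y; rewrite ltrN2 ltf_pV2 ?posrE ?to_pos_gt0 // ltr_to_pos. Qed.

Lemma to_pos_inj : injective to_pos.
Proof. exact/inc_inj/le_mono/to_pos_homo. Qed.

Lemma to_neg_inj : injective to_neg.
Proof. by move=> x y /oppr_inj /invr_inj /to_pos_inj. Qed.

Lemma to_neg_neq_to_pos x y : to_neg x <> to_pos y.
Proof. by move=> E; have := to_neg_lt0 x; rewrite E ltNge ltW ?to_pos_gt0. Qed.

Lemma to_pos_cut_ge1 x p : 1 <= p -> (p < to_pos x) = (p - 1 < x).
Proof.
move=> Hp; case: (lerP 0 x) => Hx; first by rewrite to_pos_ge0 //; apply/idP/idP; lra.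
have : to_pos x < 1 by rewrite to_pos_lt0 // invf_lt1; lra.
by move=> H1; apply/idP/idP; lra.
Qed.

Lemma to_pos_cut_01 x p : 0 < p -> p < 1 -> (p < to_pos x) = (1 - p^-1 < x).
Proof.
move=> Hp0 Hp1; have Hi : 1 < p^-1 by rewrite invf_gt1.
case: (lerP 0 x) => Hx; first by rewrite to_pos_ge0 //; apply/idP/idP; lra.
rewrite to_pos_lt0 // -[p in LHS]invrK ltf_pV2 ?posrE ?invr_gt0 //; last lra.
by apply/idP/idP; lra.
Qed.

Lemma to_pos_cut_le0 x p : p <= 0 -> p < to_pos x.
Proof. by move=> Hp; apply: le_lt_trans Hp (to_pos_gt0 x). Qed.

Lemma to_neg_cut_lt0 x p : p < 0 -> (p < to_neg x) = ((- p)^-1 < to_pos x).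
Proof.
move=> Hp; rewrite /to_neg -[p in LHS]opprK ltrN2.
by rewrite -[(- p)^-1 < _]ltf_pV2 ?posrE ?invr_gt0 ?to_pos_gt0 ?invrK //; lra.
Qed.

Lemma to_neg_cut_ge0 x p : 0 <= p -> (p < to_neg x) = false.
Proof. by move=> Hp; apply/negbTE; rewrite -leNgt (le_trans (ltW (to_neg_lt0 x))). Qed.

End IncreasingMaps.

(** * Computability relative to an oracle *)

Section RelativeComputability.
Variable O : nat -> bool.

(* Programs read missing arguments as 0 and ignore surplus ones; [pad k]
   gives a [k]-ary function exactly this view of its input. *)
Definition pad k (v : seq nat) := mkseq (nth 0 v) k.

Definition computable k (f : seq nat -> nat) :=
  exists p, forall v, eval O p v (f (pad k v)).

Lemma size_pad k v : size (pad k v) = k.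
Proof. exact: size_mkseq. Qed.

Lemma pad_id k v : size v = k -> pad k v = v.
Proof.
move=> Hv; apply: (@eq_from_nth _ 0); first by rewrite size_pad.
by move=> i; rewrite size_pad => Hi; rewrite nth_mkseq.
Qed.

Lemma nth_pad k v i : i < k -> nth 0 (pad k v) i = nth 0 v i.
Proof. exact: nth_mkseq. Qed.

Lemma padS k v : pad k.+1 v = nth 0 v 0 :: pad k (behead v).
Proof.
apply: (@eq_from_nth _ 0); first by rewrite size_pad /= size_pad.
rewrite size_pad => -[|i] Hi; first by rewrite nth_pad.
by rewrite [LHS]nth_pad //= nth_pad //; case: v => [|a v]; rewrite ?nth_nil.
Qed.

Lemma computable_ext k f g :
  computable k f -> (forall v, size v = k -> f v = g v) -> computable k g.
Proof. by move=> [p Hp] Efg; exists p => v; rewrite -Efg ?size_pad. Qed.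

Lemma computable_proj k i : i < k -> computable k (fun v => nth 0 v i).
Proof. by move=> Hi; exists (PProj i) => v; rewrite nth_pad //; constructor. Qed.

Lemma computable0 k : computable k (fun _ => 0).
Proof. by exists PZero => v; constructor. Qed.

Lemma computable_succ1 : computable 1 (fun v => (nth 0 v 0).+1).
Proof. by exists PSucc => v; rewrite nth_pad //; case: v => [|a v]; apply: eSucc. Qed.

Lemma computable_oracle1 : computable 1 (fun v => O (nth 0 v 0) : nat).
Proof.
exists POracle => v; rewrite nth_pad //.
have -> : O (nth 0 v 0) = (if O (head 0 v) then 1 else 0) :> nat.
  by case: v => [|a v] /=; case: (O _).
exact: eOracle.
Qed.

Fixpoint all_computable k (gs : seq (seq nat -> nat)) : Prop :=
  if gs is g :: gs' then computable k g /\ all_computable k gs' else True.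

Lemma evals_all_computable k gs : all_computable k gs ->
  exists ps, forall v, evals O ps v [seq g (pad k v) | g <- gs].
Proof.
elim: gs => [|g gs IH] /=; first by exists [::] => v; constructor.
move=> [[p Hp] /IH [ps Hps]].
by exists (p :: ps) => v; constructor; [apply: Hp | apply: Hps].
Qed.

Lemma computable_comp k m f gs : computable m f -> size gs = m ->
  all_computable k gs -> computable k (fun v => f [seq g v | g <- gs]).
Proof.
move=> [pf Hf] Hsize /evals_all_computable [ps Hps].
exists (PComp pf ps) => v; apply: eComp (Hps v) _.
by have := Hf [seq g (pad k v) | g <- gs]; rewrite [pad m _]pad_id ?size_map.
Qed.

Definition primrec (f g : seq nat -> nat) (ys : seq nat) (n : nat) : nat :=
  nat_rec (fun _ => nat) (f ys) (fun n r => g [:: n, r & ys]) n.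

Lemma computable_primrec k f g : computable k f -> computable k.+2 g ->
  computable k.+1 (fun v => primrec f g (behead v) (nth 0 v 0)).
Proof.
move=> [pf Hf] [pg Hg].
have Hrec n ys : size ys = k -> eval O (PPrim pf pg) (n :: ys) (primrec f g ys n).
  move=> Hys; elim: n => [|n IH]; first by apply: ePrim0; have := Hf ys; rewrite pad_id.
  by apply: ePrimS IH _; have := Hg [:: n, primrec f g ys n & ys]; rewrite pad_id //= Hys.
have Hargs v : evals O (map PProj (iota 0 k.+1)) v (pad k.+1 v).
  rewrite /pad /mkseq; elim: (iota 0 k.+1) => [|j s IH] /=; constructor=> //.
  exact: eProj.
exists (PComp (PPrim pf pg) (map PProj (iota 0 k.+1))) => v.
by apply: eComp (Hargs v) _; rewrite padS /=; apply: Hrec; apply: size_pad.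
Qed.

Lemma computable_mu k g h : computable k.+1 g ->
  (forall v, size v = k -> g (h v :: v) = 0 /\ forall m, m < h v -> g (m :: v) <> 0) ->
  computable k h.
Proof.
move=> [pg Hg] Hmin; exists (PMu pg) => v.
have [Hzero Hpos] := Hmin (pad k v) (size_pad k v).
apply: eMu; first by have := Hg (h (pad k v) :: v); rewrite padS /= Hzero.
move=> m /Hpos; have := Hg (m :: v); rewrite padS /=.
by case: (g _) => // r Hr _; exists r.
Qed.

Lemma computable_comp1 k F g : computable 1 (fun v => F (nth 0 v 0)) ->
  computable k g -> computable k (fun v => F (g v)).
Proof. by move=> HF Hg; apply: (@computable_comp k 1 _ [:: g] HF). Qed.

Lemma computable_comp2 k F g1 g2 :
  computable 2 (fun v => F (nth 0 v 0) (nth 0 v 1)) ->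
  computable k g1 -> computable k g2 -> computable k (fun v => F (g1 v) (g2 v)).
Proof. by move=> HF H1 H2; apply: (@computable_comp k 2 _ [:: g1; g2] HF). Qed.

Lemma computable_comp3 k F g1 g2 g3 :
  computable 3 (fun v => F (nth 0 v 0) (nth 0 v 1) (nth 0 v 2)) ->
  computable k g1 -> computable k g2 -> computable k g3 ->
  computable k (fun v => F (g1 v) (g2 v) (g3 v)).
Proof. by move=> HF H1 H2 H3; apply: (@computable_comp k 3 _ [:: g1; g2; g3] HF). Qed.

Lemma computable_succ k g : computable k g -> computable k (fun v => (g v).+1).
Proof. exact: (computable_comp1 (F := S) computable_succ1). Qed.

Lemma computable_oracle k g : computable k g -> computable k (fun v => O (g v) : nat).
Proof. exact: (computable_comp1 (F := fun n => O n : nat) computable_oracle1). Qed.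

Lemma computable_const k c : computable k (fun _ => c).
Proof. by elim: c => [|c IH]; [apply: computable0 | apply: computable_succ]. Qed.

Lemma computable_add k g1 g2 :
  computable k g1 -> computable k g2 -> computable k (fun v => g1 v + g2 v).
Proof.
apply: (computable_comp2 (F := addn)).
have H := computable_primrec (computable_proj (ltnSn 0))
  (computable_succ (@computable_proj 3 1 isT)).
by apply: (computable_ext H) => -[|a [|b []]] //= _; elim: a => //= a ->.
Qed.

Lemma computable_mul k g1 g2 :
  computable k g1 -> computable k g2 -> computable k (fun v => g1 v * g2 v).
Proof.
apply: (computable_comp2 (F := muln)).
have H := computable_primrec (computable0 1)
  (computable_add (@computable_proj 3 1 isT) (@computable_proj 3 2 isT)).
by apply: (computable_ext H) => -[|a [|b []]] //= _; elim: a => //= a ->; rewrite mulSn addnC.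
Qed.

Lemma computable_double k g : computable k g -> computable k (fun v => (g v).*2).
Proof.
move=> Hg; apply: (computable_ext (computable_add Hg Hg)) => v _; exact: addnn.
Qed.

Lemma computable_exp2 k g : computable k g -> computable k (fun v => 2 ^ g v).
Proof.
apply: (computable_comp1 (F := expn 2)).
have H := computable_primrec (computable_const 0 1)
  (computable_double (@computable_proj 2 1 isT)).
by apply: (computable_ext H) => -[|a []] //= _; elim: a => //= a ->; rewrite expnS mul2n.
Qed.

Lemma computable_pred k g : computable k g -> computable k (fun v => (g v).-1).
Proof.
apply: (computable_comp1 (F := predn)).
have H := computable_primrec (computable0 0) (@computable_proj 2 0 isT).
by apply: (computable_ext H) => -[|[|a] []].
Qed.

Lemma computable_sub k g1 g2 :
  computable k g1 -> computable k g2 -> computable k (fun v => g1 v - g2 v).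
Proof.
move=> H1 H2; apply: (@computable_comp2 k (fun a b => b - a)) H2 H1.
have H := computable_primrec (computable_proj (ltnSn 0))
  (computable_pred (@computable_proj 3 1 isT)).
by apply: (computable_ext H) => -[|a [|b []]] //= _; elim: a => //= [|a ->]; rewrite ?subn0 // subnS.
Qed.

Lemma computable_if k (c : seq nat -> bool) g1 g2 : computable k (fun v => c v : nat) ->
  computable k g1 -> computable k g2 -> computable k (fun v => if c v then g1 v else g2 v).
Proof.
move=> Hc H1 H2.
have Hcond : computable 3 (fun v => if nth 0 v 0 is 0 then nth 0 v 2 else nth 0 v 1).
  have H := computable_primrec (@computable_proj 2 1 isT) (@computable_proj 4 2 isT).
  by apply: (computable_ext H) => -[|[|b] [|x [|y []]]].
have := computable_comp3 (F := fun b x y => if b is 0 then y else x) Hcond Hc H1 H2.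
by move/computable_ext; apply=> v _; case: (c v).
Qed.

Lemma computable_eq0 k g : computable k g -> computable k (fun v => (g v == 0) : nat).
Proof.
apply: (computable_comp1 (F := fun n => (n == 0) : nat)).
have H := computable_primrec (computable_const 0 1) (computable0 2).
by apply: (computable_ext H) => -[|[|a] []].
Qed.

Lemma computable_leq k g1 g2 : computable k g1 -> computable k g2 ->
  computable k (fun v => (g1 v <= g2 v) : nat).
Proof.
move=> H1 H2; apply: (computable_ext (computable_eq0 (computable_sub H1 H2))) => v _.
by rewrite subn_eq0.
Qed.

Lemma computable_andb k (c1 c2 : seq nat -> bool) : computable k (fun v => c1 v : nat) ->
  computable k (fun v => c2 v : nat) -> computable k (fun v => c1 v && c2 v : nat).
Proof.
move=> H1 H2; apply: (computable_ext (computable_if H1 H2 (computable0 k))) => v _.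
by case: (c1 v).
Qed.

Lemma computable_orb k (c1 c2 : seq nat -> bool) : computable k (fun v => c1 v : nat) ->
  computable k (fun v => c2 v : nat) -> computable k (fun v => c1 v || c2 v : nat).
Proof.
move=> H1 H2; apply: (computable_ext (computable_if H1 (computable_const k 1) H2)) => v _.
by case: (c1 v).
Qed.

Lemma computable_negb k (c : seq nat -> bool) :
  computable k (fun v => c v : nat) -> computable k (fun v => ~~ c v : nat).
Proof.
move=> H; apply: (computable_ext (computable_if H (computable0 k) (computable_const k 1))).
by move=> v _; case: (c v).
Qed.

Lemma computable_eqn k g1 g2 : computable k g1 -> computable k g2 ->
  computable k (fun v => (g1 v == g2 v) : nat).
Proof.
move=> H1 H2; have H := computable_andb (computable_leq H1 H2) (computable_leq H2 H1).
by apply: (computable_ext H) => v _; rewrite eqn_leq.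
Qed.

Lemma computable_nth_behead k (s : seq nat -> seq nat) j :
  computable k (fun v => nth 0 (s v) j.+1) -> computable k (fun v => nth 0 (behead (s v)) j).
Proof. by move/computable_ext; apply=> v _; rewrite nth_behead. Qed.

Lemma computable_behead k f : computable k f -> computable k.+1 (fun v => f (behead v)).
Proof.
move=> Hf; pose projs := [seq (fun v : seq nat => nth 0 v j) | j <- iota 1 k].
have Hprojs : all_computable k.+1 projs.
  have : all (fun j => j < k.+1) (iota 1 k) by apply/allP => j; rewrite mem_iota; lia.
  rewrite /projs; elim: (iota 1 k) => //= j s IH /andP [Hj Hs].
  by split; [apply: computable_proj | apply: IH].
have := computable_comp Hf _ Hprojs; rewrite size_map size_iota => /(_ erefl) H.
apply: (computable_ext H) => -[|a v] //= [Hv]; congr f; rewrite -map_comp.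
apply: (@eq_from_nth _ 0); first by rewrite size_map size_iota.
move=> i; rewrite size_map size_iota => Hi.
by rewrite (nth_map 0) ?size_iota // nth_iota.
Qed.

Lemma computable_find k (P : nat -> seq nat -> bool) N :
  computable k.+1 (fun w => P (nth 0 w 0) (behead w) : nat) -> computable k N ->
  computable k (fun v => find (P^~ v) (iota 0 (N v))).
Proof.
move=> HP HN.
pose g w := if (N (behead w) <= nth 0 w 0) || P (nth 0 w 0) (behead w) then 0 else 1.
have Hg : computable k.+1 g.
  apply: computable_if (computable0 _) (computable_const _ 1).
  by apply: computable_orb HP; apply: computable_leq (computable_proj _);
     [apply: computable_behead|].
apply: (computable_mu Hg) => v _; rewrite /g /=; split.
  have := find_size (P^~ v) (iota 0 (N v)); rewrite size_iota leq_eqVlt.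
  case/orP => [/eqP -> | Hlt]; first by rewrite leqnn.
  have Hhas : has (P^~ v) (iota 0 (N v)) by rewrite has_find size_iota.
  by have := nth_find 0 Hhas; rewrite nth_iota // add0n => ->; rewrite orbT.
move=> m Hm; have HmN : m < N v.
  by apply: (leq_trans Hm); have := find_size (P^~ v) (iota 0 (N v)); rewrite size_iota.
by have := before_find 0 Hm; rewrite nth_iota // add0n => ->; rewrite orbF leqNgt HmN.
Qed.

Lemma computable_has k (P : nat -> seq nat -> bool) N :
  computable k.+1 (fun w => P (nth 0 w 0) (behead w) : nat) -> computable k N ->
  computable k (fun v => has (P^~ v) (iota 0 (N v)) : nat).
Proof.
move=> HP HN; have H := computable_leq (computable_succ (computable_find HP HN)) HN.
by apply: (computable_ext H) => v _; rewrite has_find size_iota.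
Qed.

End RelativeComputability.

Ltac computable_step := lazymatch goal with
 | |- computable _ _ (fun _ => nth 0 (behead _) _) => apply: computable_nth_behead
 | |- computable _ _ (fun _ => nth 0 _ _) => apply: computable_proj; done
 | |- computable _ _ (fun _ => if _ then _ else _) => apply: computable_if
 | |- computable _ _ (fun _ => nat_of_bool (_ && _)) => apply: computable_andb
 | |- computable _ _ (fun _ => nat_of_bool (_ || _)) => apply: computable_orb
 | |- computable _ _ (fun _ => nat_of_bool (~~ _)) => apply: computable_negb
 | |- computable _ _ (fun _ => nat_of_bool (_ <= _)) => apply: computable_leq
 | |- computable _ _ (fun _ => nat_of_bool (_ == _)) => apply: computable_eqn
 | |- computable _ _ (fun _ => nat_of_bool (has _ (iota 0 _))) => apply: computable_has
 | |- computable _ _ (fun _ => find _ (iota 0 _)) => apply: computable_find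
 | |- computable ?O _ (fun _ => nat_of_bool (?O _)) => apply: computable_oracle
 | |- computable _ _ (fun _ => _ + _) => apply: computable_add
 | |- computable _ _ (fun _ => _ * _) => apply: computable_mul
 | |- computable _ _ (fun _ => _ - _) => apply: computable_sub
 | |- computable _ _ (fun _ => 2 ^ _) => apply: computable_exp2
 | |- computable _ _ (fun _ => _.*2) => apply: computable_double
 | |- computable _ _ (fun _ => _.+1) => apply: computable_succ
 | |- computable _ _ (fun _ => _.-1) => apply: computable_pred
 | |- computable _ _ (fun _ => _) => apply: computable_const
 end.

Ltac computable_tac := repeat (cbv beta; computable_step).

(** * Decoding pickled rationals *)

Import CodeSeq.

Definition code_hd m := head 0 (decode m).
Definition code_tl m := code (behead (decode m)).

Lemma decode_hd_tl m : 0 < m -> decode m = code_hd m :: decode (code_tl m).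
Proof.
move=> Hm; rewrite /code_hd /code_tl codeK.
by case E: (decode m) => [|a s] //; move: Hm; rewrite -(decodeK m) E.
Qed.

Lemma code_hd_tlE m : 0 < m -> m = 2 ^ code_hd m * (code_tl m).*2.+1.
Proof. by move=> Hm; rewrite -{1}(decodeK m) decode_hd_tl // /= decodeK. Qed.

Lemma code_hd_tl_cons a b : code_hd (2 ^ a * b.*2.+1) = a /\ code_tl (2 ^ a * b.*2.+1) = b.
Proof.
have -> : 2 ^ a * b.*2.+1 = code (a :: decode b) by rewrite /= decodeK.
by rewrite /code_hd /code_tl codeK /= decodeK.
Qed.

Lemma code_hd_tl_leq m : code_hd m <= m /\ code_tl m <= m.
Proof.
case: (posnP m) => [-> // | Hm]; have := code_hd_tlE Hm.
have := ltn_expl (code_hd m) (isT : 1 < 2); have : 0 < 2 ^ code_hd m by rewrite expn_gt0.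
set p := 2 ^ _; set a := code_hd m; set b := code_tl m; rewrite -addnn.
by move=> *; clearbody p a b; split; nia.
Qed.

Lemma find_iota (P : pred nat) N i :
  i < N -> P i -> (forall j, j < i -> ~~ P j) -> find P (iota 0 N) = i.
Proof.
move=> HiN HPi Hbefore.
have Hhas : has P (iota 0 N) by apply/hasP; exists i; rewrite ?mem_iota.
have Hfind : find P (iota 0 N) < N by rewrite -[N in _ < N](size_iota 0) -has_find.
have HPf := nth_find 0 Hhas; rewrite nth_iota // add0n in HPf.
case: (ltngtP (find P (iota 0 N)) i) => // Hlt; first by have := Hbefore _ Hlt; rewrite HPf.
by have := before_find 0 Hlt; rewrite nth_iota // add0n HPi.
Qed.

Lemma code_hd_find m : code_hd m = if m == 0 then 0 else
  find (fun a => has (fun b => 2 ^ a * b.*2.+1 == m) (iota 0 m.+1)) (iota 0 m.+1).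
Proof.
case: posnP => [-> // | Hm]; have [Hhd Htl] := code_hd_tl_leq m.
symmetry; apply: find_iota => //.
  by apply/hasP; exists (code_tl m); rewrite ?mem_iota // -code_hd_tlE.
move=> a Ha; apply/hasP => -[b _ /eqP Eb].
by have := (code_hd_tl_cons a b).1; rewrite Eb => Ea; rewrite Ea ltnn in Ha.
Qed.

Lemma code_tl_find m : code_tl m = if m == 0 then 0 else
  find (fun b => 2 ^ code_hd m * b.*2.+1 == m) (iota 0 m.+1).
Proof.
case: posnP => [-> // | Hm]; have [Hhd Htl] := code_hd_tl_leq m.
symmetry; apply: find_iota => //; first by rewrite -code_hd_tlE.
move=> b Hb; apply/negP => /eqP Eb.
by have := (code_hd_tl_cons (code_hd m) b).2; rewrite Eb => E; rewrite E ltnn in Hb.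
Qed.

Section ComputableCodes.
Variable O : nat -> bool.

Lemma computable_code_hd k g : computable O k g -> computable O k (fun v => code_hd (g v)).
Proof.
apply: (computable_comp1 (F := code_hd)).
have H : computable O 1 (fun v => if nth 0 v 0 == 0 then 0 else
    find (fun a => has (fun b => 2 ^ a * b.*2.+1 == nth 0 v 0) (iota 0 (nth 0 v 0).+1))
      (iota 0 (nth 0 v 0).+1)).
  by computable_tac.
by apply: (computable_ext H) => v _; rewrite code_hd_find.
Qed.

Lemma computable_code_tl k g : computable O k g -> computable O k (fun v => code_tl (g v)).
Proof.
apply: (computable_comp1 (F := code_tl)).
have H : computable O 1 (fun v => if nth 0 v 0 == 0 then 0 else
    find (fun b => 2 ^ code_hd (nth 0 v 0) * b.*2.+1 == nth 0 v 0) (iota 0 (nth 0 v 0).+1)).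
  by computable_tac; apply: computable_code_hd; computable_tac.
by apply: (computable_ext H) => v _; rewrite code_tl_find.
Qed.

Lemma computable_code1 k g : computable O k g -> computable O k (fun v => code [:: g v]).
Proof. by move=> Hg; have H : computable O k (fun v => 2 ^ g v * 1) by computable_tac. Qed.

Lemma computable_code2 k g1 g2 : computable O k g1 -> computable O k g2 ->
  computable O k (fun v => code [:: g1 v; g2 v]).
Proof.
move=> H1 H2.
by have H : computable O k (fun v => 2 ^ g1 v * (2 ^ g2 v * 1).*2.+1) by computable_tac.
Qed.

End ComputableCodes.

Lemma dvdn_has d a : (d %| a) = has (fun q => q * d == a) (iota 0 a.+1).
Proof.
apply/idP/hasP => [|[q _ /eqP <-]]; last exact: dvdn_mull.
case: d => [|d]; first by rewrite dvd0n => /eqP ->; exists 0; rewrite ?mem_iota.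
by move=> Hd; exists (a %/ d.+1); rewrite ?divnK // mem_iota ltnS leq_div.
Qed.

Lemma coprimeDl a b : coprime (a + b) b = coprime a b.
Proof. by rewrite /coprime gcdnC addnC gcdnDl gcdnC. Qed.

Definition coprime_search a b :=
  ~~ has (fun d => [&& 1 < d, has (fun q => q * d == a) (iota 0 a.+1)
                            & has (fun q => q * d == b) (iota 0 b.+1)]) (iota 0 b.+1).

Lemma coprime_searchE a b : 0 < b -> coprime_search a b = coprime a b.
Proof.
move=> Hb; rewrite /coprime_search (@eq_has _ _ (fun d => [&& 1 < d, d %| a & d %| b]));
  last by move=> d; rewrite !dvdn_has.
apply/idP/idP => [|Hab].
  apply: contraR => Hab; apply/hasP; exists (gcdn a b).
    by rewrite mem_iota ltnS; apply: dvdn_leq => //; apply: dvdn_gcdr.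
  rewrite dvdn_gcdl dvdn_gcdr !andbT; have : 0 < gcdn a b by rewrite gcdn_gt0 Hb orbT.
  by move: Hab; rewrite /coprime; case: (gcdn a b) => [|[|g]].
apply/hasP => -[d _ /and3P [Hd Hda Hdb]].
have : d %| gcdn a b by rewrite dvdn_gcd Hda Hdb.
by move: Hab; rewrite /coprime => /eqP ->; rewrite dvdn1 => /eqP Ed; rewrite Ed in Hd.
Qed.

Lemma pmap_unpickle_nat (s : seq nat) : pmap unpickle s = s.
Proof. by elim: s => //= a s ->. Qed.

Lemma unpickle_tagged (I : countType) (T_ : I -> countType) n :
  (unpickle n : option {i : I & T_ i}) =
  if decode n is [:: ni; nx] then
    obind (fun i => omap (@Tagged I i T_) (unpickle nx)) (unpickle ni) else None.
Proof. by []. Qed.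

Lemma unpickle_option_pair n : (unpickle n : option (option nat * option nat)) =
  if decode n is [:: a; b] then Some (ohead (decode a), ohead (decode b)) else None.
Proof.
cbn; cbv [pcomp]; rewrite unpickle_tagged.
by case: (decode n) => [|a [|b [|c l]]] //=; rewrite !pmap_unpickle_nat.
Qed.

Lemma unpickle_sum n : (unpickle n : option (nat + nat)) =
  if decode n is [:: a; b] then
    if ohead (decode b) is Some y then Some (inr y) else
    if ohead (decode a) is Some x then Some (inl x) else None
  else None.
Proof.
cbn; cbv [pcomp]; rewrite unpickle_option_pair.
by case: (decode n) => [|a [|b [|c l]]] //=; case: (ohead (decode a)); case: (ohead (decode b)).
Qed.

Lemma unpickle_int_decode n : (unpickle n : option int) =
  if decode n is [:: a; b] then
    if ohead (decode b) is Some y then Some (Negz y) else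
    if ohead (decode a) is Some x then Some (Posz x) else None
  else None.
Proof.
cbn; cbv [pcomp]; rewrite unpickle_sum.
by case: (decode n) => [|a [|b [|c l]]] //=; case: (ohead (decode a)); case: (ohead (decode b)).
Qed.

Lemma unpickle_int_pair n : (unpickle n : option (int * int)) =
  if decode n is [:: a; b] then
    obind (fun i : int => omap (fun j : int => (i, j)) (unpickle b)) (unpickle a) else None.
Proof.
cbn; cbv [pcomp]; rewrite unpickle_tagged.
case: (decode n) => [|a [|b [|c l]]] //=; cbn; cbv [pcomp]; rewrite ?unpickle_sum ?unpickle_option_pair.
case: (decode a) => [|a1 [|a2 [|? ?]]] //=; case: (decode b) => [|b1 [|b2 [|? ?]]] //=;
  by case: (ohead (decode a1)); case: (ohead (decode a2));
     try case: (ohead (decode b1)); try case: (ohead (decode b2)).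
Qed.

Lemma unpickle_rat n : (unpickle n : option rat) = obind insub (unpickle n : option (int * int)).
Proof. by []. Qed.

Definition pair_code_ok c := [&& 0 < c, 0 < code_tl c & code_tl (code_tl c) == 0].

Lemma decode_pair_code c : pair_code_ok c -> decode c = [:: code_hd c; code_hd (code_tl c)].
Proof. by case/and3P => H1 H2 /eqP H3; rewrite decode_hd_tl // decode_hd_tl // H3. Qed.

Lemma decode_pair_code_ok c a b : decode c = [:: a; b] -> pair_code_ok c.
Proof.
have decode_gt0 m s : decode m = s -> s != [::] -> 0 < m by case: posnP => // -> <-.
move=> E; have Hc := decode_gt0 _ _ E isT.
move: E; rewrite decode_hd_tl // => -[_ E]; have Hc2 := decode_gt0 _ _ E isT.
move: E; rewrite decode_hd_tl // => -[_ /(congr1 code)].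
by rewrite decodeK /pair_code_ok Hc Hc2 => ->.
Qed.

Lemma ohead_decode m : ohead (decode m) = if m == 0 then None else Some (code_hd m).
Proof. by case: posnP => [-> | Hm] //; rewrite decode_hd_tl. Qed.

Definition int_code_ok c := pair_code_ok c && ((0 < code_hd (code_tl c)) || (0 < code_hd c)).
Definition int_code_isneg c := 0 < code_hd (code_tl c).
Definition int_code_negval c := code_hd (code_hd (code_tl c)).
Definition int_code_posval c := code_hd (code_hd c).
Definition int_of_code c : int :=
  if int_code_isneg c then Negz (int_code_negval c) else Posz (int_code_posval c).
Definition int_code_abs c :=
  if int_code_isneg c then (int_code_negval c).+1 else int_code_posval c.

Lemma absz_int_of_code c : `|int_of_code c|%N = int_code_abs c.
Proof. by rewrite /int_of_code /int_code_abs; case: int_code_isneg. Qed.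

Lemma unpickle_int c : unpickle c = if int_code_ok c then Some (int_of_code c) else None.
Proof.
rewrite unpickle_int_decode /int_code_ok /int_of_code.
case: (boolP (pair_code_ok c)) => [/decode_pair_code -> | Hc] /=.
  rewrite !ohead_decode /int_code_isneg /int_code_negval /int_code_posval.
  by case: (code_hd (code_tl c)) => [|y] //=; case: (code_hd c).
by case E: (decode c) => [|a [|b [|]]] //; rewrite (decode_pair_code_ok E) in Hc.
Qed.

Definition rat_code_den n := int_code_posval (code_hd (code_tl n)).

Definition rat_code_ok n := pair_code_ok n &&
  [&& int_code_ok (code_hd n), int_code_ok (code_hd (code_tl n)),
      ~~ int_code_isneg (code_hd (code_tl n)), 0 < rat_code_den n
    & coprime_search (int_code_abs (code_hd n)) (rat_code_den n)].

Lemma unpickle_rat_ok n : rat_code_ok n -> exists q : rat,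
  unpickle n = Some q /\ numq q = int_of_code (code_hd n) /\ denq q = Posz (rat_code_den n).
Proof.
case/andP => /decode_pair_code Hn /and5P [Hnum Hden Hpos Hden0 Hcop].
rewrite unpickle_rat unpickle_int_pair Hn !unpickle_int Hnum Hden /=.
have -> : int_of_code (code_hd (code_tl n)) = Posz (rat_code_den n).
  by rewrite /int_of_code (negbTE Hpos).
case: insubP => /= [q _ Eq | ]; first by exists q; rewrite /numq /denq Eq.
by rewrite ltz_nat Hden0 absz_int_of_code -coprime_searchE // Hcop.
Qed.

Lemma unpickle_rat_notok n : ~~ rat_code_ok n -> (unpickle n : option rat) = None.
Proof.
rewrite unpickle_rat unpickle_int_pair /rat_code_ok.
case: (boolP (pair_code_ok n)) => [/decode_pair_code -> | Hn] /=; last first.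
  by case E: (decode n) => [|a [|b [|]]] //; rewrite (decode_pair_code_ok E) in Hn.
rewrite !unpickle_int; case: int_code_ok => //=; case: int_code_ok => //= Hn.
rewrite insubF //; apply/negbTE; apply: contra Hn => /andP /= [].
rewrite /int_of_code; case: int_code_isneg => //=.
by rewrite ltz_nat -/(rat_code_den n) => Hden; rewrite Hden -coprime_searchE // -absz_int_of_code.
Qed.

Definition code_Posz m := code [:: code [:: m]; 0].
Definition code_Negz k := code [:: 0; code [:: k]].

Lemma pickle_Posz m : pickle (Posz m) = code_Posz m. Proof. by []. Qed.
Lemma pickle_Negz k : pickle (Negz k) = code_Negz k. Proof. by []. Qed.

(** * Oracle programs for the cuts of the image points *)

Ltac computable_code_step := lazymatch goal with
 | |- computable _ _ (fun _ => code_hd _) => apply: computable_code_hd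
 | |- computable _ _ (fun _ => code_tl _) => apply: computable_code_tl
 | |- computable _ _ (fun _ => code [:: _]) => apply: computable_code1
 | |- computable _ _ (fun _ => code [:: _; _]) => apply: computable_code2
 | |- computable _ _ (fun _ => code_Posz _) => rewrite /code_Posz
 | |- computable _ _ (fun _ => code_Negz _) => rewrite /code_Negz
 | |- computable _ _ (fun _ => nat_of_bool (rat_code_ok _)) => rewrite /rat_code_ok
 | |- computable _ _ (fun _ => nat_of_bool (pair_code_ok _)) => rewrite /pair_code_ok
 | |- computable _ _ (fun _ => nat_of_bool (int_code_ok _)) => rewrite /int_code_ok
 | |- computable _ _ (fun _ => nat_of_bool (int_code_isneg _)) => rewrite /int_code_isneg
 | |- computable _ _ (fun _ => nat_of_bool (coprime_search _ _)) => rewrite /coprime_search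
 | |- computable _ _ (fun _ => int_code_posval _) => rewrite /int_code_posval
 | |- computable _ _ (fun _ => int_code_negval _) => rewrite /int_code_negval
 | |- computable _ _ (fun _ => int_code_abs _) => rewrite /int_code_abs
 | |- computable _ _ (fun _ => rat_code_den _) => rewrite /rat_code_den
 end.
Ltac computable_code_tac := repeat (cbv beta; first [computable_code_step | computable_step]).

Section Cuts.
Variable O : nat -> bool.

Local Notation isneg n := (int_code_isneg (code_hd n)).
Local Notation posnum n := (int_code_posval (code_hd n)).
Local Notation negnum n := (int_code_negval (code_hd n)).
Local Notation den n := (rat_code_den n).
Local Notation ask i d := (nat_of_bool (O (code [:: i; code_Posz d]))).

(* [n] codes a rational [a/d] in lowest terms; each branch either answers
   directly or asks the oracle about the preimage of [a/d], again written in
   lowest terms since [real_code] only accepts canonical codes. *)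
Definition to_pos_cut n :=
  if rat_code_ok n then
    if ~~ isneg n && (0 < posnum n) then
      if den n <= posnum n then ask (code_Posz (posnum n - den n)) (den n)
      else ask (code_Negz (den n - posnum n).-1) (posnum n)
    else 1
  else 0.

Definition to_pos_cut_inv n :=
  if rat_code_ok n then
    if ~~ isneg n then ask (code_Posz (posnum n + den n)) (den n)
    else ask (code_Posz (den n)) (den n + (negnum n).+1)
  else 0.

Definition to_neg_cut n :=
  if rat_code_ok n then
    if isneg n then
      if negnum n < den n then ask (code_Posz (den n - (negnum n).+1)) (negnum n).+1
      else ask (code_Negz (negnum n - den n)) (den n)
    else 0
  else 0.

Definition to_neg_cut_inv n :=
  if rat_code_ok n then
    if ~~ isneg n then ask (code_Negz (den n).-1) (posnum n + den n)
    else ask (code_Negz (den n + negnum n)) (den n)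
  else 0.

Lemma computable_to_pos_cut : computable O 1 (fun v => to_pos_cut (nth 0 v 0)).
Proof. by rewrite /to_pos_cut; computable_code_tac. Qed.

Lemma computable_to_pos_cut_inv : computable O 1 (fun v => to_pos_cut_inv (nth 0 v 0)).
Proof. by rewrite /to_pos_cut_inv; computable_code_tac. Qed.

Lemma computable_to_neg_cut : computable O 1 (fun v => to_neg_cut (nth 0 v 0)).
Proof. by rewrite /to_neg_cut; computable_code_tac. Qed.

Lemma computable_to_neg_cut_inv : computable O 1 (fun v => to_neg_cut_inv (nth 0 v 0)).
Proof. by rewrite /to_neg_cut_inv; computable_code_tac. Qed.

End Cuts.

(** * The maps preserve Turing degrees *)

Section RealCodes.
Variable R : realType.
Local Open Scope ring_scope.
Implicit Types x : R.

Lemma intr_Posz m : (Posz m)%:~R = m%:R :> R.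
Proof. by []. Qed.

Lemma intr_Negz k : (Negz k)%:~R = - k.+1%:R :> R.
Proof. by rewrite NegzE mulrNz. Qed.

Lemma real_codeE x n : real_code x n =
  rat_code_ok n && ((int_of_code (code_hd n))%:~R / (rat_code_den n)%:R < x).
Proof.
rewrite /real_code; case: (boolP (rat_code_ok n)) => [/unpickle_rat_ok | /unpickle_rat_notok -> //].
by case=> q [-> [Hnum Hden]]; rewrite /ratr Hnum Hden.
Qed.

Lemma real_code_pair x (i : int) d : (0 < d)%N -> coprime `|i| d ->
  real_code x (code [:: pickle i; code_Posz d]) = (i%:~R / d%:R < x).
Proof.
move=> Hd Hcop; have Hq : (0 < (i, Posz d).2) && coprime `|(i, Posz d).1| `|(i, Posz d).2|.
  by rewrite /= ltz_nat Hd.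
have <- : pickle (@Rat (i, Posz d) Hq) = code [:: pickle i; code_Posz d] by [].
by rewrite /real_code pickleK.
Qed.

Lemma rat_code_ok_den n : rat_code_ok n ->
  (0 < rat_code_den n)%N /\ coprime (int_code_abs (code_hd n)) (rat_code_den n).
Proof. by case/andP => _ /and5P [_ _ _ Hd]; rewrite coprime_searchE. Qed.

Lemma to_pos_cutE x n : to_pos_cut (real_code x) n = real_code (to_pos x) n.
Proof.
rewrite /to_pos_cut [real_code (to_pos x) n]real_codeE; case Hok: (rat_code_ok n) => //.
have [Hd] := rat_code_ok_den Hok; rewrite /int_of_code /int_code_abs andTb.
set a := code_hd n; set d := rat_code_den n; set m := int_code_posval a.
have Hd' : (0 : R) < d%:R by rewrite ltr0n.
move=> Hcop; case: ifP => [/andP [Hpos Hm] | Hnm]; last first.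
  rewrite to_pos_cut_le0 //; case: (int_code_isneg a) Hnm => Hnm.
    by rewrite intr_Negz mulNr oppr_le0 divr_ge0 // ler0n.
  by move: Hnm => /= /negbT; rewrite lt0n negbK => /eqP ->; rewrite mul0r.
rewrite (negbTE Hpos) in Hcop *.
have Hm' : (0 : R) < m%:R by rewrite ltr0n.
case: ifP => Hdm.
  rewrite -pickle_Posz real_code_pair //; last by rewrite /absz -coprimeDl subnK.
  rewrite intr_Posz to_pos_cut_ge1; last by rewrite ler_pdivlMr // mul1r ler_nat.
  by rewrite natrB // mulrBl divff // lt0r_neq0.
have Hdm' : (m < d)%N by rewrite ltnNge Hdm.
rewrite -pickle_Negz real_code_pair //; last first.
  rewrite /absz prednK ?subn_gt0 // -coprimeDl subnK 1?coprime_sym //; exact: ltnW.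
rewrite intr_Negz prednK ?subn_gt0 // to_pos_cut_01; first last.
- by rewrite ltr_pdivrMr // mul1r ltr_nat.
- by rewrite divr_gt0.
congr (_ < _); rewrite natrB; last exact: ltnW.
by field; apply/andP; split; apply: lt0r_neq0.
Qed.

Lemma to_pos_cut_invE x n : to_pos_cut_inv (real_code (to_pos x)) n = real_code x n.
Proof.
rewrite /to_pos_cut_inv [real_code x n]real_codeE; case Hok: (rat_code_ok n) => //.
have [Hd] := rat_code_ok_den Hok; rewrite /int_of_code /int_code_abs andTb.
set a := code_hd n; set d := rat_code_den n; set m := int_code_posval a.
set k := int_code_negval a; have Hd' : (0 : R) < d%:R by rewrite ltr0n.
move=> Hcop; case: ifP => Hneg.
  rewrite (negbTE Hneg) in Hcop *.
  rewrite -pickle_Posz real_code_pair //; last by rewrite /absz coprimeDl.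
  rewrite !intr_Posz -[_ < x]ltr_to_pos (to_pos_ge0 (x := _ / _)) ?divr_ge0 ?ler0n //.
  by congr (_ < _); rewrite natrD mulrDl divff // lt0r_neq0.
move/negbFE: Hneg => Hneg; rewrite Hneg in Hcop *.
rewrite -pickle_Posz real_code_pair ?addn_gt0 ?Hd //; last by rewrite /absz coprime_sym addnC coprimeDl.
rewrite intr_Posz intr_Negz -[_ < x]ltr_to_pos (to_pos_lt0 (x := - _ / _)); last first.
  by rewrite mulNr oppr_lt0 divr_gt0 // ltr0n.
congr (_ < _); rewrite natrD; field.
have Hk : (0 : R) <= k%:R by rewrite ler0n.
by apply/andP; split; apply: lt0r_neq0; lra.
Qed.

Lemma to_neg_cutE x n : to_neg_cut (real_code x) n = real_code (to_neg x) n.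
Proof.
rewrite /to_neg_cut [real_code (to_neg x) n]real_codeE; case Hok: (rat_code_ok n) => //.
have [Hd] := rat_code_ok_den Hok; rewrite /int_of_code /int_code_abs andTb.
set a := code_hd n; set d := rat_code_den n; set k := int_code_negval a.
have Hd' : (0 : R) < d%:R by rewrite ltr0n.
move=> Hcop; case: ifP => Hneg; last by rewrite to_neg_cut_ge0 // intr_Posz divr_ge0 // ler0n.
rewrite Hneg in Hcop; have Hk : (0 : R) < k.+1%:R by rewrite ltr0n.
rewrite intr_Negz to_neg_cut_lt0; last by rewrite mulNr oppr_lt0 divr_gt0.
rewrite mulNr opprK invf_div; case: ifP => Hkd.
  rewrite -pickle_Posz real_code_pair //; last by rewrite /absz -coprimeDl subnK // coprime_sym.
  rewrite intr_Posz to_pos_cut_ge1; last by rewrite ler_pdivlMr // mul1r ler_nat.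
  by rewrite natrB // mulrBl divff // lt0r_neq0.
have Hkd' : (d <= k)%N by rewrite leqNgt Hkd.
rewrite -pickle_Negz real_code_pair //; last first.
  by rewrite -[absz _]/(k - d).+1 -coprimeDl addSn subnK.
rewrite intr_Negz to_pos_cut_01; first last.
- by rewrite ltr_pdivrMr // mul1r ltr_nat ltnS.
- by rewrite divr_gt0.
congr (_ < _); rewrite invf_div -subSn // natrB; last exact: leqW.
by field; apply: lt0r_neq0.
Qed.

Lemma to_neg_cut_invE x n : to_neg_cut_inv (real_code (to_neg x)) n = real_code x n.
Proof.
rewrite /to_neg_cut_inv [real_code x n]real_codeE; case Hok: (rat_code_ok n) => //.
have [Hd] := rat_code_ok_den Hok; rewrite /int_of_code /int_code_abs andTb.
set a := code_hd n; set d := rat_code_den n; set m := int_code_posval a.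
set k := int_code_negval a; have Hd' : (0 : R) < d%:R by rewrite ltr0n.
move=> Hcop; case: ifP => Hneg.
  rewrite (negbTE Hneg) in Hcop *.
  have Hmd : (0 < m + d)%N by rewrite addn_gt0 Hd orbT.
  rewrite -pickle_Negz real_code_pair //; last by rewrite /absz prednK // coprime_sym coprimeDl.
  rewrite intr_Posz intr_Negz prednK // -[_ < x]ltr_to_neg /to_neg.
  rewrite (to_pos_ge0 (x := _ / _)) ?divr_ge0 ?ler0n //.
  have Hm0 : (0 : R) <= m%:R by rewrite ler0n.
  rewrite mulNr; congr (- _ < _); rewrite natrD; field.
  by apply/andP; split; apply: lt0r_neq0; lra.
move/negbFE: Hneg => Hneg; rewrite Hneg in Hcop *.
rewrite -pickle_Negz real_code_pair //; last by rewrite -[absz _]/(d + k).+1 -addnS addnC coprimeDl.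
have Hk : (0 : R) < k.+1%:R by rewrite ltr0n.
rewrite !intr_Negz -[_ < x]ltr_to_neg /to_neg (to_pos_lt0 (x := - _ / _)); last first.
  by rewrite mulNr oppr_lt0 divr_gt0.
rewrite invrK !mulNr; congr (- _ < _); rewrite -addnS natrD; field.
exact: lt0r_neq0.
Qed.

End RealCodes.

Lemma turing_le_computable (A B : nat -> bool) f :
  computable B 1 (fun v => f (nth 0 v 0)) -> (forall n, f n = A n) -> turing_le A B.
Proof. by move=> [p Hp] HfA; exists p => n; have := Hp [:: n]; rewrite pad_id //= HfA; case: (A n). Qed.

Lemma turing_eq_to_pos (R : realType) (x : R) : turing_eq (real_code x) (real_code (to_pos x)).
Proof.
split; first exact: turing_le_computable (computable_to_pos_cut_inv _) (to_pos_cut_invE x).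
exact: turing_le_computable (computable_to_pos_cut _) (to_pos_cutE x).
Qed.

Lemma turing_eq_to_neg (R : realType) (x : R) : turing_eq (real_code x) (real_code (to_neg x)).
Proof.
split; first exact: turing_le_computable (computable_to_neg_cut_inv _) (to_neg_cut_invE x).
exact: turing_le_computable (computable_to_neg_cut _) (to_neg_cutE x).
Qed.

Theorem mainTheorem16 :
  forall (R : realType) (S : (nat -> bool) -> Prop),
    degree_invariant S ->
    ~ countable_degrees S ->
    ~ entangled2 S (reals_in_degrees (R := R) S).
Proof.
move=> R S HS _ [[I [e [HI [He e_inj]]]] Hentangled].
pose x i := to_neg (e i); pose y i := to_pos (e i).
have Hxy i : reals_in_degrees S (x i) /\ reals_in_degrees S (y i) /\ x i <> y i.
  split; first exact: HS (turing_eq_to_neg _) (He i).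
  by split; [apply: HS (turing_eq_to_pos _) (He i) | apply: to_neg_neq_to_pos].
have Hdisjoint a b : a <> b -> [/\ x a <> x b, x a <> y b, y a <> x b & y a <> y b].
  move=> Hab; split; try exact: to_neg_neq_to_pos.
  - by move/to_neg_inj/e_inj.
  - by move/esym; apply: to_neg_neq_to_pos.
  - by move/to_pos_inj/e_inj.
have [_ [a [b []]]] := Hentangled I x y HI Hxy Hdisjoint.
by rewrite ltr_to_neg ltr_to_pos => /lt_trans H /H; rewrite ltxx.
Qed.
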